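(* Let $\chi,b,\nu,\mu>0$ with $b\ge\frac32\chi\mu$, and $c\in\mathbb{R}$. Let $r$ be globally Hölder continuous and bounded with $r^*:=\sup_{\mathbb{R}}r>0$, finite limits $r(\pm\infty)<0$, and $\min\{r(\infty),r(-\infty)\}\le r(x)$ for all $x$. Fix $\bar r$ with $\max\{r(-\infty),r(\infty)\}<\bar r<0$, a point $\bar x$ with $r(x)<\bar r$ for all $x<\bar x$, a point $\tilde x$ with $r(x)<\bar r$ for all $x>\tilde x$, let $\bar\theta$ be the positive root of $\theta^2+c\theta+\bar r=0$ and $\tilde\theta$ the positive root of $\theta^2-c\theta+\bar r=0$. Then for every $u\in\mathcal{E}_2^+$: $\mathcal{A}_u\big(\frac{r^*}{b-\chi\mu}e^{\bar\theta(\cdot-\bar x)}\big)(x)\le0$ for $x\in(-\infty,\bar x)$; $\mathcal{A}_u\big(\frac{r^*}{b-\chi\mu}\big)(x)\le0$ for $x\in\mathbb{R}$; and $\mathcal{A}_u\big(\frac{r^*}{b-\chi\mu}e^{-\tilde\theta(\cdot-\tilde x)}\big)(x)\le0$ for $x\in(\tilde x,\infty)$.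
   Context: $C^b_{\rm unif}(\mathbb{R})$: bounded uniformly continuous functions on $\mathbb{R}$. $\Psi(x;u)=\frac{\mu}{2\sqrt\nu}\int_{\mathbb{R}}e^{-\sqrt\nu|x-y|}u(y)dy$ (bounded solution of $\Psi''-\nu\Psi+\mu u=0$). $U_2^+(x)=\frac{r^*}{b-\chi\mu}e^{\bar\theta(x-\bar x)}$ for $x<\bar x$, $=\frac{r^*}{b-\chi\mu}$ for $\bar x\le x\le\tilde x$, $=\frac{r^*}{b-\chi\mu}e^{-\tilde\theta(x-\tilde x)}$ for $x>\tilde x$; $\mathcal{E}_2^+=\{u\in C^b_{\rm unif}(\mathbb{R}):0\le u(x)\le U_2^+(x)\ \forall x\}$. For $u\in\mathcal{E}_2^+$, $\mathcal{A}_u(U)(x)=U_{xx}+(c-\chi\Psi_x(x;u))U_x+(r(x)-\chi\nu\Psi(x;u)-(b-\chi\mu)U)U$. *)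

From Stdlib Require Import Reals.
From Coquelicot Require Import Coquelicot.
Open Scope R_scope.

Definition Psi (mu nu : R) (u : R -> R) (x : R) : R :=
  mu / (2 * sqrt nu) *
  RInt_gen (fun y => exp (- sqrt nu * Rabs (x - y)) * u y)
           (Rbar_locally m_infty) (Rbar_locally p_infty).

Definition Psi_x (mu nu : R) (u : R -> R) (x : R) : R :=
  Derive (Psi mu nu u) x.

Definition A_op (chi mu nu b c : R) (r : R -> R) (u U : R -> R) (x : R) : R :=
  Derive_n U 2 x + (c - chi * Psi_x mu nu u x) * Derive U x
  + (r x - chi * nu * Psi mu nu u x - (b - chi * mu) * U x) * U x.

Definition U2plus (chi mu b rstar thb tht xb xt : R) (x : R) : R :=
  if Rlt_dec x xb then rstar / (b - chi * mu) * exp (thb * (x - xb))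
  else if Rle_dec x xt then rstar / (b - chi * mu)
  else rstar / (b - chi * mu) * exp (- tht * (x - xt)).

Definition bounded_unif_cont (u : R -> R) : Prop :=
  (exists M, forall x, Rabs (u x) <= M) /\
  (forall eps, 0 < eps -> exists delta, 0 < delta /\
     forall x y, Rabs (x - y) < delta -> Rabs (u x - u y) < eps).

Definition E2plus (chi mu b rstar thb tht xb xt : R) (u : R -> R) : Prop :=
  bounded_unif_cont u /\
  forall x, 0 <= u x <= U2plus chi mu b rstar thb tht xb xt x.

Definition globally_Holder (r : R -> R) : Prop :=
  exists alpha L, 0 < alpha <= 1 /\ 0 <= L /\
    forall x y, x <> y -> Rabs (r x - r y) <= L * Rpower (Rabs (x - y)) alpha.

Definition bounded_fun (r : R -> R) : Prop := exists M, forall x, Rabs (r x) <= M.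

Definition is_sup_fun (r : R -> R) (s : R) : Prop :=
  (forall x, r x <= s) /\ (forall e, 0 < e -> exists x, s - e < r x).

(* Write s = sqrt nu.  Splitting the convolution at x gives
   Psi = mu/(2s) (L + R) with L(x) = int_{-oo}^x e^{-s(x-y)} u(y) dy and
   R(x) = int_x^{+oo} e^{-s(y-x)} u(y) dy, both nonnegative, L' = u - s L and
   R' = s R - u, hence Psi_x = mu/2 (R - L).  For the constant K = rstar/(b - chi mu),
   A_u(K) = (r - chi nu Psi - rstar) K <= 0.  For U = K e^{theta (x - x0)} with
   theta^2 + c theta + rbar = 0 and u <= U left of x, one gets (s + theta) L <= U, so
     A_u(U)/U = (r - rbar) - chi mu/2 (R - L) theta - chi mu s/2 (L + R) - (b - chi mu) U
             <= chi mu/2 theta L - (b - chi mu) U <= (3/2 chi mu - b) U <= 0.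
   The decaying exponential right of xt is the mirror image, with L and R exchanged. *)

From Stdlib Require Import Reals Lra Psatz Classical_Pred_Type.
From Coquelicot Require Import Coquelicot.
Open Scope R_scope.

Lemma filterlim_p_infty_nondecreasing (F : R -> R) (a B : R) :
  (forall x y, a <= x <= y -> F x <= F y) -> (forall x, a <= x -> F x <= B) ->
  exists l, filterlim F (Rbar_locally p_infty) (locally l).
Proof.
intros Hmono Hbnd.
destruct (completeness (fun z => exists x, a <= x /\ z = F x)) as [l [Hub Hlub]].
- exists B. intros z [x [Hx ->]]. now apply Hbnd.
- exists (F a), a. split; [apply Rle_refl | reflexivity].
- exists l. intros P [eps HP].
  assert (Hnear : exists x0, a <= x0 /\ l - eps < F x0).
  { apply not_all_not_ex. intros Hnot.
    assert (l <= l - eps).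
    { apply Hlub. intros z [x [Hx ->]].
      apply Rnot_lt_le. intros Hlt. now apply (Hnot x). }
    pose proof (cond_pos eps). lra. }
  destruct Hnear as [x0 [Hax0 Hx0]].
  exists x0. intros x Hx. apply HP. change (Rabs (F x - l) < eps).
  assert (F x <= l) by (apply Hub; exists x; split; [lra | reflexivity]).
  assert (F x0 <= F x) by (apply Hmono; lra).
  apply Rabs_def1; lra.
Qed.

Lemma is_RInt_gen_p_infty_of_filterlim (f : R -> R) (a l : R) :
  (forall b, ex_RInt f a b) ->
  filterlim (RInt f a) (Rbar_locally p_infty) (locally l) ->
  is_RInt_gen f (at_point a) (Rbar_locally p_infty) l.
Proof.
intros Hf Hlim P HP.
apply Filter_prod with (fun x => x = a) (fun b => P (RInt f a b)).
- reflexivity.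
- exact (Hlim P HP).
- intros x b -> Hb. exists (RInt f a b). split; [exact (RInt_correct _ _ _ (Hf b)) | exact Hb].
Qed.

Lemma is_RInt_gen_p_infty_shift (f : R -> R) (a x l : R) :
  ex_RInt f x a -> is_RInt_gen f (at_point a) (Rbar_locally p_infty) l ->
  is_RInt_gen f (at_point x) (Rbar_locally p_infty) (RInt f x a + l).
Proof.
intros Hxa Hl. apply (is_RInt_gen_Chasles f a); [|exact Hl].
apply is_RInt_gen_at_point. exact (RInt_correct _ _ _ Hxa).
Qed.

Lemma is_RInt_gen_p_infty_norm (f g : R -> R) (a lf lg : R) :
  (forall y, a <= y -> Rabs (f y) <= g y) ->
  is_RInt_gen f (at_point a) (Rbar_locally p_infty) lf ->
  is_RInt_gen g (at_point a) (Rbar_locally p_infty) lg -> Rabs lf <= lg.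
Proof.
intros Hfg Hf Hg.
apply (@RInt_gen_norm R_CompleteNormedModule (at_point a) (Rbar_locally p_infty) _ _
  f g lf lg); [| | exact Hf | exact Hg].
- apply Filter_prod with (fun x => x = a) (fun b => a < b); [reflexivity | now exists a |].
  intros x b -> Hb. simpl. lra.
- apply Filter_prod with (fun x => x = a) (fun b => a < b); [reflexivity | now exists a |].
  intros x b -> Hb y Hy. apply Hfg. simpl in Hy. lra.
Qed.

Lemma is_RInt_gen_p_infty_ge0 (f : R -> R) (a l : R) :
  (forall y, a <= y -> 0 <= f y) ->
  is_RInt_gen f (at_point a) (Rbar_locally p_infty) l -> 0 <= l.
Proof.
intros Hf Hl.
assert (Rabs l <= l).
{ apply (is_RInt_gen_p_infty_norm f f a); [| exact Hl | exact Hl].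
  intros y Hy. rewrite Rabs_pos_eq; [apply Rle_refl | now apply Hf]. }
pose proof (Rabs_pos l). lra.
Qed.

Lemma is_RInt_gen_p_infty_le (f g : R -> R) (a lf lg : R) :
  (forall y, a <= y -> Rabs (f y) <= g y) ->
  is_RInt_gen f (at_point a) (Rbar_locally p_infty) lf ->
  is_RInt_gen g (at_point a) (Rbar_locally p_infty) lg -> lf <= lg.
Proof.
intros Hfg Hf Hg. apply Rle_trans with (Rabs lf); [apply Rle_abs |].
exact (is_RInt_gen_p_infty_norm f g a lf lg Hfg Hf Hg).
Qed.

Lemma ex_RInt_gen_p_infty_le (f g : R -> R) (a lg : R) :
  (forall x y, ex_RInt f x y) -> (forall x y, ex_RInt g x y) ->
  (forall y, a <= y -> 0 <= f y <= g y) ->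
  is_RInt_gen g (at_point a) (Rbar_locally p_infty) lg ->
  ex_RInt_gen f (at_point a) (Rbar_locally p_infty).
Proof.
intros Hf Hg Hfg Hlg.
assert (Hmono : forall x y, a <= x <= y -> RInt f a x <= RInt f a y).
{ intros x y Hxy. rewrite <- (RInt_Chasles f a x y) by apply Hf.
  assert (0 <= RInt f x y).
  { apply RInt_ge_0; [lra | apply Hf |]. intros z Hz. apply Hfg. lra. }
  change (plus (RInt f a x) (RInt f x y)) with (RInt f a x + RInt f x y). lra. }
assert (Hbnd : forall b, a <= b -> RInt f a b <= lg).
{ intros b Hb.
  assert (Htail : 0 <= RInt g b a + lg).
  { apply (is_RInt_gen_p_infty_ge0 g b); [intros y Hy; pose proof (Hfg y ltac:(lra)); lra |].
    apply is_RInt_gen_p_infty_shift; [apply Hg | exact Hlg]. }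
  rewrite <- (opp_RInt_swap g a b (Hg a b)) in Htail.
  assert (RInt f a b <= RInt g a b).
  { apply RInt_le; [lra | apply Hf | apply Hg |]. intros z Hz. apply Hfg. lra. }
  change (opp (RInt g a b)) with (- RInt g a b) in Htail. lra. }
destruct (filterlim_p_infty_nondecreasing (RInt f a) a lg Hmono Hbnd) as [l Hl].
exists l. apply is_RInt_gen_p_infty_of_filterlim; [apply Hf | exact Hl].
Qed.

Lemma filterlim_exp_p_infty (C k : R) : 0 < k ->
  filterlim (fun y => C * exp (- k * y)) (Rbar_locally p_infty) (locally 0).
Proof.
intros Hk.
apply (filterlim_comp _ _ _ (fun y => - k * y) (fun z => C * exp z) _ (Rbar_locally m_infty)).
- intros P [M HM]. exists (- M / k). intros y Hy. apply HM.
  assert (k * (- M / k) = - M) by (field; lra). nra.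
- rewrite <- (Rmult_0_r C).
  apply (filterlim_comp _ _ _ exp (fun z => C * z) _ (locally 0)).
  + exact is_lim_exp_m.
  + apply (continuous_mult (fun _ => C) (fun z => z)); [apply continuous_const | apply continuous_id].
Qed.

Lemma is_RInt_gen_exp_p_infty (k x : R) : 0 < k ->
  is_RInt_gen (fun y => exp (- k * y)) (at_point x) (Rbar_locally p_infty)
    (exp (- k * x) / k).
Proof.
intros Hk.
set (F := fun y => - / k * exp (- k * y)).
assert (HF : forall y, is_derive F y (exp (- k * y))).
{ intros y. unfold F. auto_derive; [trivial | field; lra]. }
replace (exp (- k * x) / k) with (0 - F x) by (unfold F; field; lra).
apply (is_RInt_gen_ext (Derive F)).
- apply filter_forall. intros ab y _. now apply is_derive_unique.
- apply is_RInt_gen_Derive.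
  + apply filter_forall. intros ab y _. eexists. apply HF.
  + apply filter_forall. intros ab y _.
    apply (continuous_ext (fun y => exp (- k * y))).
    * intros z. symmetry. now apply is_derive_unique.
    * apply (@ex_derive_continuous R_AbsRing R_NormedModule). auto_derive. trivial.
  + intros P HP. exact (locally_singleton _ _ HP).
  + exact (filterlim_exp_p_infty (- / k) k Hk).
Qed.

Lemma is_RInt_gen_comp_opp (f : R -> R) (a l : R) :
  is_RInt_gen f (at_point a) (Rbar_locally p_infty) l ->
  is_RInt_gen (fun y => f (- y)) (Rbar_locally m_infty) (at_point (- a)) l.
Proof.
intros Hf P HP. destruct (Hf P HP) as [Q R HQ [M HR] HQR].
apply Filter_prod with (fun x => M < - x) (fun b => b = - a).
- exists (- M). intros x Hx. lra.
- reflexivity.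
- intros x b Hx ->. destruct (HQR a (- x) HQ (HR _ Hx)) as [I [HI HPI]].
  exists I. split; [| exact HPI].
  apply is_RInt_swap in HI. rewrite <- (Ropp_involutive a) in HI.
  apply is_RInt_comp_opp, is_RInt_opp in HI. simpl.
  rewrite opp_opp in HI.
  apply (is_RInt_ext _ _ _ _ _ (fun y _ => opp_opp (f (- y))) HI).
Qed.

Lemma is_derive_RInt_gen_p_infty (f : R -> R) (x : R) :
  (forall y, continuous f y) ->
  (forall a, ex_RInt_gen f (at_point a) (Rbar_locally p_infty)) ->
  is_derive (fun a => RInt_gen f (at_point a) (Rbar_locally p_infty)) x (- f x).
Proof.
intros Hcont Hex.
set (T := fun a => RInt_gen f (at_point a) (Rbar_locally p_infty)).
assert (Hint : forall a b, ex_RInt f a b)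
  by (intros a b; apply (@ex_RInt_continuous R_CompleteNormedModule); intros; apply Hcont).
assert (HT : forall a, RInt f a 0 + T 0 = T a).
{ intros a. symmetry. apply is_RInt_gen_unique, is_RInt_gen_p_infty_shift; [apply Hint |].
  exact (RInt_gen_correct f (Hex 0)). }
apply (is_derive_ext (fun a => RInt f a 0 + T 0)); [exact HT |].
replace (- f x) with (- f x + 0) by ring.
apply (is_derive_plus (fun a => RInt f a 0) (fun _ => T 0));
  [| exact (@is_derive_const R_AbsRing R_NormedModule (T 0) x)].
apply (is_derive_RInt' f (fun a => RInt f a 0) x 0); [| apply Hcont].
apply filter_forall. intros a. exact (RInt_correct _ _ _ (Hint a 0)).
Qed.

Lemma continuous_exp_mult (u : R -> R) (k y : R) :
  (forall x, continuous u x) -> continuous (fun z => exp (k * z) * u z) y.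
Proof.
intros Hu. apply (continuous_mult (fun z => exp (k * z)) u); [| apply Hu].
apply (@ex_derive_continuous R_AbsRing R_NormedModule). auto_derive. trivial.
Qed.

(* The right half int_x^{+oo} e^{-s(y-x)} u(y) dy of the convolution, with the factor
   e^{sx} pulled out so that x only occurs as the lower limit of integration. *)
Definition conv_right (s : R) (u : R -> R) (x : R) : R :=
  exp (s * x) * RInt_gen (fun y => exp (- s * y) * u y) (at_point x) (Rbar_locally p_infty).

Definition conv_left (s : R) (u : R -> R) (x : R) : R :=
  conv_right s (fun y => u (- y)) (- x).

Section RightHalfConvolution.

Variables (s M : R) (u : R -> R).
Hypotheses (Hs : 0 < s) (Hu_cont : forall x, continuous u x)
  (Hu_bnd : forall y, 0 <= u y <= M).

Lemma ex_RInt_gen_conv_right (x : R) :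
  ex_RInt_gen (fun y => exp (- s * y) * u y) (at_point x) (Rbar_locally p_infty).
Proof.
apply (ex_RInt_gen_p_infty_le _ (fun y => M * exp (- s * y)) x (M * (exp (- s * x) / s))).
- intros a b. apply (@ex_RInt_continuous R_CompleteNormedModule).
  intros z _. now apply continuous_exp_mult.
- intros a b. apply (@ex_RInt_continuous R_CompleteNormedModule).
  intros z _. apply (@ex_derive_continuous R_AbsRing R_NormedModule). auto_derive. trivial.
- intros y _. pose proof (exp_pos (- s * y)). destruct (Hu_bnd y). split; nra.
- apply (is_RInt_gen_scal (fun y => exp (- s * y)) M), is_RInt_gen_exp_p_infty, Hs.
Qed.

Lemma is_RInt_gen_conv_right (x : R) :
  is_RInt_gen (fun y => exp (- s * Rabs (x - y)) * u y) (at_point x) (Rbar_locally p_infty)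
    (conv_right s u x).
Proof.
apply (is_RInt_gen_ext (fun y => exp (s * x) * (exp (- s * y) * u y))).
- apply Filter_prod with (fun a => a = x) (fun b => x < b); [reflexivity | now exists x |].
  intros a b -> Hb y [Hy _]. simpl in Hy. rewrite Rmin_left in Hy by lra.
  rewrite Rabs_minus_sym, Rabs_pos_eq by lra.
  rewrite <- Rmult_assoc, <- exp_plus. f_equal. f_equal. ring.
- unfold conv_right.
  exact (is_RInt_gen_scal _ (exp (s * x)) _ (RInt_gen_correct _ (ex_RInt_gen_conv_right x))).
Qed.

Lemma conv_right_ge0 (x : R) : 0 <= conv_right s u x.
Proof.
apply (is_RInt_gen_p_infty_ge0 (fun y => exp (- s * Rabs (x - y)) * u y) x);
  [| exact (is_RInt_gen_conv_right x)].
intros y _. pose proof (exp_pos (- s * Rabs (x - y))). destruct (Hu_bnd y). nra.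
Qed.

Lemma is_derive_conv_right (x : R) :
  is_derive (conv_right s u) x (s * conv_right s u x - u x).
Proof.
set (T := fun a => RInt_gen (fun y => exp (- s * y) * u y) (at_point a) (Rbar_locally p_infty)).
assert (HT : is_derive T x (- (exp (- s * x) * u x))).
{ apply (is_derive_RInt_gen_p_infty (fun y => exp (- s * y) * u y));
    [intros y; now apply continuous_exp_mult | exact ex_RInt_gen_conv_right]. }
assert (HE : is_derive (fun y => exp (s * y)) x (s * exp (s * x)))
  by (auto_derive; [trivial | ring]).
assert (Hinv : exp (s * x) * exp (- s * x) = 1)
  by (rewrite <- exp_plus, <- exp_0; f_equal; ring).
replace (s * conv_right s u x - u x)
  with (s * exp (s * x) * T x + exp (s * x) * - (exp (- s * x) * u x)).
- exact (is_derive_mult _ _ x _ _ HE HT Rmult_comm).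
- unfold conv_right. fold (T x).
  replace (exp (s * x) * - (exp (- s * x) * u x)) with (- (exp (s * x) * exp (- s * x)) * u x)
    by ring.
  rewrite Hinv. ring.
Qed.

Lemma conv_right_le (C k y0 x : R) : 0 < s + k ->
  (forall y, x <= y -> u y <= C * exp (- k * (y - y0))) ->
  (s + k) * conv_right s u x <= C * exp (- k * (x - y0)).
Proof.
intros Hsk Hbound.
set (D := C * exp (s * x + k * y0)).
assert (HD : forall y, D * exp (- (s + k) * y) = exp (- s * (y - x)) * (C * exp (- k * (y - y0)))).
{ intros y. unfold D.
  rewrite Rmult_assoc, <- exp_plus, (Rmult_comm (exp _)), Rmult_assoc, <- exp_plus.
  do 2 f_equal. ring. }
assert (H : conv_right s u x <= D * (exp (- (s + k) * x) / (s + k))).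
{ apply (is_RInt_gen_p_infty_le (fun y => exp (- s * Rabs (x - y)) * u y)
    (fun y => D * exp (- (s + k) * y)) x).
  - intros y Hy. rewrite HD, Rabs_minus_sym, (Rabs_pos_eq (y - x)) by lra.
    pose proof (exp_pos (- s * (y - x))). destruct (Hu_bnd y).
    rewrite Rabs_pos_eq by nra.
    apply Rmult_le_compat_l; [lra | now apply Hbound].
  - apply is_RInt_gen_conv_right.
  - exact (is_RInt_gen_scal _ D _ (is_RInt_gen_exp_p_infty (s + k) x Hsk)). }
apply Rmult_le_compat_l with (r := s + k) in H; [| lra].
replace ((s + k) * (D * (exp (- (s + k) * x) / (s + k)))) with (D * exp (- (s + k) * x))
  in H by (field; lra).
rewrite HD, Rminus_diag, Rmult_0_r, exp_0, Rmult_1_l in H. exact H.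
Qed.

End RightHalfConvolution.

Lemma continuous_comp_opp (u : R -> R) :
  (forall x, continuous u x) -> forall x, continuous (fun y => u (- y)) x.
Proof.
intros Hu x. apply (continuous_comp Ropp u); [| apply Hu].
apply (@ex_derive_continuous R_AbsRing R_NormedModule). auto_derive. trivial.
Qed.

Section LeftHalfConvolution.

Variables (s M : R) (u : R -> R).
Hypotheses (Hs : 0 < s) (Hu_cont : forall x, continuous u x)
  (Hu_bnd : forall y, 0 <= u y <= M).

Let Hv_cont := continuous_comp_opp u Hu_cont.
Let Hv_bnd : forall y, 0 <= u (- y) <= M := fun y => Hu_bnd (- y).

Lemma is_RInt_gen_conv_left (x : R) :
  is_RInt_gen (fun y => exp (- s * Rabs (x - y)) * u y) (Rbar_locally m_infty) (at_point x)
    (conv_left s u x).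
Proof.
assert (H := is_RInt_gen_comp_opp _ _ _
  (is_RInt_gen_conv_right s M (fun y => u (- y)) Hs Hv_cont Hv_bnd (- x))).
rewrite (Ropp_involutive x) in H.
apply (is_RInt_gen_ext (fun y => exp (- s * Rabs (- x - - y)) * u (- - y))); [| exact H].
apply filter_forall. intros ab y _. rewrite Ropp_involutive.
replace (- x - - y) with (- (x - y)) by ring. now rewrite Rabs_Ropp.
Qed.

Lemma conv_left_ge0 (x : R) : 0 <= conv_left s u x.
Proof. exact (conv_right_ge0 s M (fun y => u (- y)) Hs Hv_cont Hv_bnd (- x)). Qed.

Lemma is_derive_conv_left (x : R) :
  is_derive (conv_left s u) x (u x - s * conv_left s u x).
Proof.
unfold conv_left.
replace (u x - s * conv_right s (fun y => u (- y)) (- x))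
  with (scal (-1) (s * conv_right s (fun y => u (- y)) (- x) - u (- - x))).
- apply (is_derive_comp (conv_right s (fun y => u (- y))) Ropp x).
  + exact (is_derive_conv_right s M (fun y => u (- y)) Hs Hv_cont Hv_bnd (- x)).
  + auto_derive; [trivial | ring].
- rewrite Ropp_involutive. unfold scal; simpl; unfold mult; simpl. ring.
Qed.

Lemma conv_left_le (C k y0 x : R) : 0 < s + k ->
  (forall y, y <= x -> u y <= C * exp (k * (y - y0))) ->
  (s + k) * conv_left s u x <= C * exp (k * (x - y0)).
Proof.
intros Hsk Hbound. unfold conv_left.
replace (k * (x - y0)) with (- k * (- x - - y0)) by ring.
apply (conv_right_le s M); [exact Hs | exact Hv_cont | exact Hv_bnd | exact Hsk |].
intros y Hy. replace (- k * (y - - y0)) with (k * (- y - y0)) by ring.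
apply Hbound. lra.
Qed.

End LeftHalfConvolution.

Section PsiDecomposition.

Variables (mu nu M : R) (u : R -> R).
Hypotheses (Hnu : 0 < nu) (Hu_cont : forall x, continuous u x)
  (Hu_bnd : forall y, 0 <= u y <= M).

Let Hs : 0 < sqrt nu := sqrt_lt_R0 nu Hnu.

Lemma Psi_eq (x : R) :
  Psi mu nu u x = mu / (2 * sqrt nu) * (conv_left (sqrt nu) u x + conv_right (sqrt nu) u x).
Proof.
unfold Psi. f_equal. apply is_RInt_gen_unique.
exact (is_RInt_gen_Chasles _ x _ _
  (is_RInt_gen_conv_left (sqrt nu) M u Hs Hu_cont Hu_bnd x)
  (is_RInt_gen_conv_right (sqrt nu) M u Hs Hu_cont Hu_bnd x)).
Qed.

Lemma Psi_x_eq (x : R) :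
  Psi_x mu nu u x = mu / 2 * (conv_right (sqrt nu) u x - conv_left (sqrt nu) u x).
Proof.
set (s := sqrt nu). unfold Psi_x. apply is_derive_unique.
apply (is_derive_ext (fun x => mu / (2 * s) * (conv_left s u x + conv_right s u x)));
  [intros t; symmetry; apply Psi_eq |].
replace (mu / 2 * (conv_right s u x - conv_left s u x))
  with (mu / (2 * s) * ((u x - s * conv_left s u x) + (s * conv_right s u x - u x)))
  by (field; apply Rgt_not_eq, Hs).
apply is_derive_scal, (is_derive_plus (conv_left s u) (conv_right s u)).
- exact (is_derive_conv_left s M u Hs Hu_cont Hu_bnd x).
- exact (is_derive_conv_right s M u Hs Hu_cont Hu_bnd x).
Qed.

End PsiDecomposition.

Lemma A_op_const (chi mu nu b c K : R) (r u : R -> R) (x : R) :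
  A_op chi mu nu b c r u (fun _ => K) x
  = (r x - chi * nu * Psi mu nu u x - (b - chi * mu) * K) * K.
Proof.
unfold A_op. rewrite Derive_const.
replace (Derive_n (fun _ => K) 2 x) with 0; [ring |].
simpl. rewrite (Derive_ext _ (fun _ => 0)) by (intros; apply Derive_const).
symmetry. apply Derive_const.
Qed.

Lemma A_op_exp (chi mu nu b c K th x0 : R) (r u : R -> R) (x : R) :
  A_op chi mu nu b c r u (fun y => K * exp (th * (y - x0))) x
  = K * exp (th * (x - x0)) *
    (th ^ 2 + (c - chi * Psi_x mu nu u x) * th + r x - chi * nu * Psi mu nu u x
     - (b - chi * mu) * (K * exp (th * (x - x0)))).
Proof.
assert (D1 : forall y, Derive (fun y => K * exp (th * (y - x0))) y = th * (K * exp (th * (y - x0))))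
  by (intros y; apply is_derive_unique; auto_derive; [trivial | unfold Rminus; ring]).
unfold A_op. simpl. rewrite (Derive_ext _ _ _ D1), D1.
replace (Derive (fun y => th * (K * exp (th * (y - x0)))) x)
  with (th * (th * (K * exp (th * (x - x0))))).
- ring.
- symmetry. apply is_derive_unique. auto_derive; [trivial | unfold Rminus; ring].
Qed.

Lemma supersolution_bracket (chi mu nu s b c th rb rx U Lb La : R) :
  0 < chi -> 0 < mu -> 0 < s -> s * s = nu -> 0 < th -> 3 / 2 * chi * mu <= b ->
  th ^ 2 + c * th + rb = 0 -> rx < rb -> 0 <= Lb -> 0 <= La -> (s + th) * Lb <= U ->
  th ^ 2 + (c - chi * (mu / 2 * (La - Lb))) * th + rx
  - chi * nu * (mu / (2 * s) * (Lb + La)) - (b - chi * mu) * U <= 0.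
Proof.
intros Hchi Hmu Hs <- Hth Hb Hroot Hrx HLb HLa HU.
replace (chi * (s * s) * (mu / (2 * s) * (Lb + La))) with (chi * mu * s / 2 * (Lb + La))
  by (field; lra).
assert (Hcm : 0 < chi * mu) by nra.
assert (chi * mu * (th * Lb) <= chi * mu * (U - s * Lb))
  by (apply Rmult_le_compat_l; lra).
assert (0 <= chi * mu * (th * La)) by (apply Rmult_le_pos; [| apply Rmult_le_pos]; lra).
assert (0 <= chi * mu * (s * Lb)) by (apply Rmult_le_pos; [| apply Rmult_le_pos]; lra).
assert (0 <= chi * mu * (s * La)) by (apply Rmult_le_pos; [| apply Rmult_le_pos]; lra).
assert (0 <= (b - 3 / 2 * chi * mu) * U) by (apply Rmult_le_pos; nra).
nra.
Qed.

Section Supersolutions.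

Variables (chi mu nu b c M : R) (r u : R -> R).
Hypotheses (Hchi : 0 < chi) (Hmu : 0 < mu) (Hnu : 0 < nu) (Hb : 3 / 2 * chi * mu <= b)
  (Hu_cont : forall x, continuous u x) (Hu_bnd : forall y, 0 <= u y <= M).

Let Hs : 0 < sqrt nu := sqrt_lt_R0 nu Hnu.
Let Hss : sqrt nu * sqrt nu = nu := sqrt_sqrt nu (Rlt_le 0 nu Hnu).

Lemma A_op_const_nonpos (rstar x : R) : 0 <= rstar -> r x <= rstar ->
  A_op chi mu nu b c r u (fun _ => rstar / (b - chi * mu)) x <= 0.
Proof.
intros Hrstar Hrx.
rewrite A_op_const, (Psi_eq mu nu M u Hnu Hu_cont Hu_bnd x).
assert (Hbcm : 0 < b - chi * mu) by nra.
assert (HK : 0 <= rstar / (b - chi * mu)) by (apply Rdiv_le_0_compat; lra).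
replace ((b - chi * mu) * (rstar / (b - chi * mu))) with rstar by (field; lra).
assert (0 <= mu / (2 * sqrt nu)) by (apply Rdiv_le_0_compat; lra).
pose proof (conv_left_ge0 (sqrt nu) M u Hs Hu_cont Hu_bnd x).
pose proof (conv_right_ge0 (sqrt nu) M u Hs Hu_cont Hu_bnd x).
assert (0 <= chi * nu * (mu / (2 * sqrt nu)
  * (conv_left (sqrt nu) u x + conv_right (sqrt nu) u x))).
{ apply Rmult_le_pos; [nra |]. apply Rmult_le_pos; lra. }
nra.
Qed.

Lemma A_op_exp_left_nonpos (K th x0 rb x : R) :
  0 <= K -> 0 < th -> th ^ 2 + c * th + rb = 0 -> r x < rb ->
  (forall y, y <= x -> u y <= K * exp (th * (y - x0))) ->
  A_op chi mu nu b c r u (fun y => K * exp (th * (y - x0))) x <= 0.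
Proof.
intros HK Hth Hroot Hrx Hbound.
rewrite A_op_exp, (Psi_eq mu nu M u Hnu Hu_cont Hu_bnd x),
  (Psi_x_eq mu nu M u Hnu Hu_cont Hu_bnd x).
set (U := K * exp (th * (x - x0))).
assert (HU : 0 <= U) by (pose proof (exp_pos (th * (x - x0))); unfold U; nra).
assert (HL : (sqrt nu + th) * conv_left (sqrt nu) u x <= U)
  by exact (conv_left_le (sqrt nu) M u Hs Hu_cont Hu_bnd K th x0 x ltac:(lra) Hbound).
rewrite <- (Rmult_0_r U). apply Rmult_le_compat_l; [exact HU |].
apply (supersolution_bracket chi mu nu (sqrt nu) b c th rb); try assumption.
- apply conv_left_ge0 with M; assumption.
- apply conv_right_ge0 with M; assumption.
Qed.

Lemma A_op_exp_right_nonpos (K th x0 rb x : R) :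
  0 <= K -> 0 < th -> th ^ 2 - c * th + rb = 0 -> r x < rb ->
  (forall y, x <= y -> u y <= K * exp (- th * (y - x0))) ->
  A_op chi mu nu b c r u (fun y => K * exp (- th * (y - x0))) x <= 0.
Proof.
intros HK Hth Hroot Hrx Hbound.
rewrite A_op_exp, (Psi_eq mu nu M u Hnu Hu_cont Hu_bnd x),
  (Psi_x_eq mu nu M u Hnu Hu_cont Hu_bnd x).
set (U := K * exp (- th * (x - x0))).
assert (HU : 0 <= U) by (pose proof (exp_pos (- th * (x - x0))); unfold U; nra).
assert (HR : (sqrt nu + th) * conv_right (sqrt nu) u x <= U)
  by exact (conv_right_le (sqrt nu) M u Hs Hu_cont Hu_bnd K th x0 x ltac:(lra) Hbound).
rewrite <- (Rmult_0_r U). apply Rmult_le_compat_l; [exact HU |].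
assert (H := supersolution_bracket chi mu nu (sqrt nu) b (- c) th rb (r x) U
  (conv_right (sqrt nu) u x) (conv_left (sqrt nu) u x) Hchi Hmu Hs Hss Hth Hb
  ltac:(lra) Hrx (conv_right_ge0 (sqrt nu) M u Hs Hu_cont Hu_bnd x)
  (conv_left_ge0 (sqrt nu) M u Hs Hu_cont Hu_bnd x) HR).
lra.
Qed.

End Supersolutions.

Lemma bounded_unif_cont_continuous (u : R -> R) :
  bounded_unif_cont u -> forall x, continuous u x.
Proof.
intros [_ Hunif] x. apply continuity_pt_filterlim.
intros eps Heps. destruct (Hunif eps Heps) as [delta [Hdelta Hu]].
exists delta. split; [exact Hdelta |]. intros y [_ Hy]. now apply Hu.
Qed.

Lemma U2plus_lt (chi mu b rstar thb tht xb xt x : R) : x < xb ->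
  U2plus chi mu b rstar thb tht xb xt x = rstar / (b - chi * mu) * exp (thb * (x - xb)).
Proof. intros Hx. unfold U2plus. destruct (Rlt_dec x xb); [reflexivity | contradiction]. Qed.

Lemma U2plus_gt (chi mu b rstar thb tht xb xt x : R) : xb <= xt -> xt < x ->
  U2plus chi mu b rstar thb tht xb xt x = rstar / (b - chi * mu) * exp (- tht * (x - xt)).
Proof.
intros Hxbt Hx. unfold U2plus.
destruct (Rlt_dec x xb); [lra |]. destruct (Rle_dec x xt); [lra | reflexivity].
Qed.

Theorem lemma4p1
  (chi b nu mu c : R) (r : R -> R) (rstar rp rm rbar xb xt thb tht : R)
  (Hchi : 0 < chi) (Hb : 0 < b) (Hnu : 0 < nu) (Hmu : 0 < mu)
  (Hbchi : b >= 3 / 2 * chi * mu)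
  (Hhold : globally_Holder r) (Hbdd : bounded_fun r)
  (Hsup : is_sup_fun r rstar) (Hrstar : 0 < rstar)
  (Hlimp : is_lim r p_infty rp) (Hlimm : is_lim r m_infty rm)
  (Hrp : rp < 0) (Hrm : rm < 0)
  (Hmin : forall x, Rmin rp rm <= r x)
  (Hrbar1 : Rmax rm rp < rbar) (Hrbar2 : rbar < 0)
  (Hxb : forall x, x < xb -> r x < rbar)
  (Hxt : forall x, x > xt -> r x < rbar)
  (Hthb : 0 < thb /\ thb ^ 2 + c * thb + rbar = 0)
  (Htht : 0 < tht /\ tht ^ 2 - c * tht + rbar = 0) :
  forall u : R -> R, E2plus chi mu b rstar thb tht xb xt u ->
    (forall x, x < xb ->
       A_op chi mu nu b c r u
         (fun y => rstar / (b - chi * mu) * exp (thb * (y - xb))) x <= 0) /\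
    (forall x,
       A_op chi mu nu b c r u (fun _ => rstar / (b - chi * mu)) x <= 0) /\
    (forall x, x > xt ->
       A_op chi mu nu b c r u
         (fun y => rstar / (b - chi * mu) * exp (- tht * (y - xt))) x <= 0).
Proof.
intros u [Hbuc HuU].
assert (Hu_cont := bounded_unif_cont_continuous u Hbuc).
destruct Hbuc as [[M HM] _].
assert (Hu_bnd : forall y, 0 <= u y <= M).
{ intros y. pose proof (HuU y). pose proof (Rle_abs (u y)). pose proof (HM y). lra. }
assert (Hxbt : xb <= xt).
{ destruct Hsup as [_ Hsup_approx]. destruct (Hsup_approx rstar Hrstar) as [z Hz].
  destruct (Rlt_or_le z xb) as [Hzb | Hzb]; [specialize (Hxb z Hzb); lra |].
  destruct (Rle_or_lt z xt) as [Hzt | Hzt]; [lra | specialize (Hxt z Hzt); lra]. }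
assert (HK : 0 <= rstar / (b - chi * mu)) by (apply Rdiv_le_0_compat; nra).
assert (Hb' : 3 / 2 * chi * mu <= b) by lra.
destruct Hthb as [Hthb Hthb_root]. destruct Htht as [Htht Htht_root].
split; [| split].
- intros x Hx. apply (A_op_exp_left_nonpos chi mu nu b c M r u) with rbar; auto.
  intros y Hy. specialize (HuU y). rewrite U2plus_lt in HuU by lra. lra.
- intros x. apply (A_op_const_nonpos chi mu nu b c M r u); try assumption.
  + lra.
  + apply Hsup.
- intros x Hx. apply (A_op_exp_right_nonpos chi mu nu b c M r u) with rbar; auto.
  intros y Hy. specialize (HuU y). rewrite U2plus_gt in HuU by lra. lra.
Qed.
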